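(* Let $M$ be an involutive monoid. The tuple category $T(M)$ has the structure of a $\mathcal{D}_{\mathbf{Cat}}$-algebra; that is, it is an $E_\infty$-algebra in $\mathbf{Cat}$.
   Context: An involutive monoid is a monoid $M$ with a map $m\mapsto\overline m$ with $\overline{\overline m}=m$, $\overline{mn}=\overline n\,\overline m$, $\overline 1=1$. Let $C_2=\{1,t\}$. The category $\Delta H_+$: objects $[n]=\{0,\dots,n\}$ for $n\ge -1$ (with $[-1]=\emptyset$); a morphism $f:[n]\to[m]$ is a map of sets with a total order on each fibre $f^{-1}(i)$ and a $C_2$-label on each element of $[n]$; the composite $g\circ f$ has fibre over $i$ equal to the concatenation, in the order of $g^{-1}(i)$, of the fibres $f^{-1}(j)$, each replaced by $f^{-1}(j)^t$ (order reversed, labels multiplied by $t$) when $j$ has label $t$ in $g$. For $f:[p-1]\to[q-1]$ and $\mathbf m=(m_0,\dots,m_{p-1})\in M^p$, let $\mathsf{H}_M(f)(\mathbf m)=(b_0,\dots,b_{q-1})$ with $b_i$ the product, in the order of $f^{-1}(i)$, of $m_x$ (label $1$) or $\overline{m_x}$ (label $t$), empty product $1$. The tuple category $T(M)$ has as objects all finite (possibly empty) tuples of elements of $M$; for each $f\in\mathrm{Hom}_{\Delta H_+}([p-1],[q-1])$, $p,q\ge0$, and $\mathbf m\in M^p$ there is a morphism $(f,\mathbf m):\mathbf m\to\mathsf H_M(f)(\mathbf m)$, composition being induced by composition in $\Delta H_+$. The categorical Barratt–Eccles operad $\mathcal D_{\mathbf{Cat}}$ has $\mathcal D_{\mathbf{Cat}}(m)=\mathbb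 E\Sigma_m$ (objects the elements of $\Sigma_m$, a unique morphism between any two objects), with composition on objects $(\sigma,\tau_1,\dots,\tau_m)\mapsto\tau_{\sigma^{-1}(1)}\times\cdots\times\tau_{\sigma^{-1}(m)}$ (block permutation), and $\Sigma_m$ acting by right multiplication; it is an $E_\infty$-operad in $\mathbf{Cat}$ with the Thomason model structure. *)

From mathcomp Require Import all_boot.
Set Implicit Arguments. Unset Strict Implicit. Unset Printing Implicit Defensive.

Record invMonoid := InvMonoid {
  im_car :> Type;
  im_mul : im_car -> im_car -> im_car;
  im_one : im_car;
  im_inv : im_car -> im_car;
  im_mulA : associative im_mul;
  im_mul1m : left_id im_one im_mul;
  im_mulm1 : right_id im_one im_mul;
  im_invK : involutive im_inv;
  im_invM : forall x y, im_inv (im_mul x y) = im_mul (im_inv y) (im_inv x);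
  im_inv1 : im_inv im_one = im_one }.

(* ---------- The category Delta H_+ ----------
   A morphism f : [p-1] -> [q-1] is encoded as the list of its q fibres
   f^{-1}(0), ..., f^{-1}(q-1); each fibre is the list, in its total order,
   of its elements x together with their C_2-label (false = 1, true = t). *)
Definition dh_mor := seq (seq (nat * bool)).
Definition dh_dom (f : dh_mor) : nat := size (flatten f).
Definition dh_cod (f : dh_mor) : nat := size f.
Definition dh_valid (f : dh_mor) : bool :=
  perm_eq [seq y.1 | y <- flatten f] (iota 0 (dh_dom f)).

(* s^t : order reversed, labels multiplied by t *)
Definition dh_twist (s : seq (nat * bool)) : seq (nat * bool) :=
  rev [seq (y.1, ~~ y.2) | y <- s].

Definition dh_comp (g f : dh_mor) : dh_mor :=
  [seq flatten [seq (if y.2 then dh_twist (nth [::] f y.1) else nth [::] f y.1)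
               | y <- gi] | gi <- g].

Definition dh_id (n : nat) : dh_mor := [seq [:: (i, false)] | i <- iota 0 n].

Definition dh_act (M : invMonoid) (f : dh_mor) (m : seq M) : seq M :=
  [seq foldr (fun y acc =>
       im_mul (if y.2 then im_inv (nth (im_one M) m y.1) else nth (im_one M) m y.1) acc)
     (im_one M) fi | fi <- f].

Record precat := PreCat {
  Ob : Type;
  Mor : Type;
  src : Mor -> Ob;
  tgt : Mor -> Ob;
  idm : Ob -> Mor;
  comp : Mor -> Mor -> Mor   (* comp g f = g o f, meaningful when src g = tgt f *)
}.
Arguments src : clear implicits.
Arguments tgt : clear implicits.
Arguments idm : clear implicits.
Arguments comp : clear implicits.

Definition is_category (C : precat) : Prop :=
  [/\ (forall a, src C (idm C a) = a /\ tgt C (idm C a) = a),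
      (forall g f, src C g = tgt C f ->
          src C (comp C g f) = src C f /\ tgt C (comp C g f) = tgt C g),
      (forall f, comp C f (idm C (src C f)) = f),
      (forall f, comp C (idm C (tgt C f)) f = f) &
      (forall h g f, src C h = tgt C g -> src C g = tgt C f ->
          comp C h (comp C g f) = comp C (comp C h g) f)].

(* ---------- The tuple category T(M) ----------
   A morphism (f, m) : m -> H_M(f)(m) is stored as the pair (m, f). *)
Section Tuple.
Variable M : invMonoid.

Definition tm_valid (p : seq M * dh_mor) : bool :=
  dh_valid p.2 && (dh_dom p.2 == size p.1).

Definition tm_mor := {p : seq M * dh_mor | tm_valid p}.

Lemma dh_id_fst n : [seq y.1 | y <- flatten (dh_id n)] = iota 0 n.
Proof.
rewrite /dh_id; elim: n 0 => [|n IH] k //=.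
by rewrite IH.
Qed.

Lemma tm_id_valid (a : seq M) : tm_valid (a, dh_id (size a)).
Proof.
rewrite /tm_valid /dh_valid /dh_dom /=.
have Hs : size (flatten (dh_id (size a))) = size a.
  by rewrite -(size_map (fun y : nat * bool => y.1)) dh_id_fst size_iota.
by rewrite Hs dh_id_fst perm_refl eqxx.
Qed.

Definition tm_src (f : tm_mor) : seq M := (val f).1.
Definition tm_tgt (f : tm_mor) : seq M := dh_act (val f).2 (val f).1.
Definition tm_idm (a : seq M) : tm_mor := exist _ (a, dh_id (size a)) (tm_id_valid a).
(* for non-composable pairs the value is irrelevant junk (we return f) *)
Definition tm_comp (g f : tm_mor) : tm_mor :=
  insubd f ((val f).1, dh_comp (val g).2 (val f).2).

Definition TM : precat := PreCat tm_src tm_tgt tm_idm tm_comp.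
End Tuple.

(* ---------- The categorical Barratt-Eccles operad D_Cat ----------
   An object sigma of E Sigma_m is encoded by the sequence
   w = (sigma^{-1}(1), ..., sigma^{-1}(m)) (0-based), i.e. a permutation
   w of iota 0 m.  E Sigma_m is chaotic: a unique morphism w -> w' for all w w'.
   Operad composition (sigma; tau_1..tau_m) |-> tau_{sigma^{-1}(1)} x ... x
   tau_{sigma^{-1}(m)} (block permutation):                                   *)
Definition isperm (w : seq nat) (n : nat) : bool := perm_eq w (iota 0 n).

Definition gamma_seq (w : seq nat) (us : seq (seq nat)) (ks : seq nat) : seq nat :=
  flatten [seq map (addn (sumn (take j ks))) (nth [::] us j) | j <- w].

Fixpoint composable_all {C : precat} (gs fs : seq (Mor C)) : Prop :=
  match gs, fs with
  | [::], [::] => True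
  | g :: gs', f :: fs' => src C g = tgt C f /\ composable_all gs' fs'
  | _, _ => False
  end.

(* A D_Cat-algebra structure on C: functors theta_m : E Sigma_m x C^m -> C
   (object part th_ob, morphism part th_mor, the E Sigma_m-morphism being
   determined by its source w and target w'), satisfying unit, associativity
   and equivariance (Sigma_m acting on E Sigma_m by right multiplication). *)
Record DCat_alg (C : precat) := {
  th_ob : seq nat -> seq (Ob C) -> Ob C;
  th_mor : seq nat -> seq nat -> seq (Mor C) -> Mor C;
  th_src : forall w w' fs, isperm w (size fs) -> isperm w' (size fs) ->
    src C (th_mor w w' fs) = th_ob w [seq src C f | f <- fs];
  th_tgt : forall w w' fs, isperm w (size fs) -> isperm w' (size fs) ->
    tgt C (th_mor w w' fs) = th_ob w' [seq tgt C f | f <- fs];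
  th_id : forall w xs, isperm w (size xs) ->
    th_mor w w [seq idm C x | x <- xs] = idm C (th_ob w xs);
  th_comp : forall w w' w'' fs gs,
    isperm w (size fs) -> isperm w' (size fs) -> isperm w'' (size fs) ->
    composable_all gs fs ->
    comp C (th_mor w' w'' gs) (th_mor w w' fs)
      = th_mor w w'' [seq comp C p.1 p.2 | p <- zip gs fs];
  th_unit_ob : forall x, th_ob [:: 0] [:: x] = x;
  th_unit_mor : forall f, th_mor [:: 0] [:: 0] [:: f] = f;
  th_equiv_ob : forall w r xs (x0 : Ob C),
    isperm w (size xs) -> isperm r (size xs) ->
    th_ob [seq nth 0 r i | i <- w] xs = th_ob w [seq nth x0 xs j | j <- r];
  th_equiv_mor : forall w w' r fs (f0 : Mor C),
    isperm w (size fs) -> isperm w' (size fs) -> isperm r (size fs) ->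
    th_mor [seq nth 0 r i | i <- w] [seq nth 0 r i | i <- w'] fs
      = th_mor w w' [seq nth f0 fs j | j <- r];
  th_assoc_ob : forall w us xss,
    isperm w (size xss) -> size us = size xss ->
    (forall j, j < size xss -> isperm (nth [::] us j) (size (nth [::] xss j))) ->
    th_ob (gamma_seq w us [seq size xs | xs <- xss]) (flatten xss)
      = th_ob w [seq th_ob (nth [::] us j) (nth [::] xss j) | j <- iota 0 (size xss)];
  th_assoc_mor : forall w w' us us' fss,
    isperm w (size fss) -> isperm w' (size fss) ->
    size us = size fss -> size us' = size fss ->
    (forall j, j < size fss -> isperm (nth [::] us j) (size (nth [::] fss j))) ->
    (forall j, j < size fss -> isperm (nth [::] us' j) (size (nth [::] fss j))) ->
    th_mor (gamma_seq w us [seq size fs | fs <- fss])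
           (gamma_seq w' us' [seq size fs | fs <- fss]) (flatten fss)
      = th_mor w w' [seq th_mor (nth [::] us j) (nth [::] us' j) (nth [::] fss j)
                    | j <- iota 0 (size fss)]
}.

From mathcomp Require Import all_boot.
Set Implicit Arguments. Unset Strict Implicit. Unset Printing Implicit Defensive.

(* Evaluating a labelled fibre of [f] on [m] gives the corresponding entry of H_M(f)(m),
   and twisting a fibre inverts its product; hence H_M(g o f) = H_M(g) o H_M(f) and T(M) is
   a category whose composition is that of ΔH_+.
   The action sends (σ; m_1, ..., m_k) to the concatenation m_{σ^-1(1)} ... m_{σ^-1(k)}, and
   the morphism σ -> σ' of EΣ_k together with morphisms (f_i, m_i) to the block sum of the
   f_{σ^-1(j)} followed by the permutation of target blocks from the order σ to the order σ'.
   The algebra axioms then reduce to three facts about such block morphisms of ΔH_+: H_M acts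
   on them blockwise, composing two of them composes the blocks and the block permutations,
   and a block morphism of block morphisms is the block morphism of the operad composite. *)

Lemma perm_flatten_map_in (A T : eqType) (F G : A -> seq T) (s : seq A) :
  {in s, forall x, perm_eq (F x) (G x)} ->
  perm_eq (flatten (map F s)) (flatten (map G s)).
Proof.
elim: s => //= x s IH FG; rewrite perm_cat ?FG ?mem_head ?IH // => y ys.
by rewrite FG // inE ys orbT.
Qed.

Lemma perm_flatten_map (A T : eqType) (F : A -> seq T) (s t : seq A) :
  perm_eq s t -> perm_eq (flatten (map F s)) (flatten (map F t)).
Proof. by move=> st; apply/perm_flatten/perm_map. Qed.

Lemma flatten_flatten (T : Type) (sss : seq (seq (seq T))) :
  flatten (flatten sss) = flatten (map flatten sss).
Proof. by elim: sss => //= ss sss <-; rewrite flatten_cat. Qed.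

Lemma nth_flatten_index (T : Type) (x0 : T) ss r c : c < size (nth [::] ss r) ->
  nth x0 (flatten ss) (flatten_index (shape ss) r c) = nth x0 (nth [::] ss r) c.
Proof.
by move=> lt_c; rewrite nth_flatten flatten_indexKl ?flatten_indexKr // nth_shape.
Qed.

Lemma flatten_iota_blocks (ns : seq nat) o :
  flatten [seq iota (o + sumn (take k ns)) (nth 0 ns k) | k <- iota 0 (size ns)]
  = iota o (sumn ns).
Proof.
elim: ns o => [|n ns IH] o //=.
rewrite addn0 iotaD -IH (iotaDl 1) -map_comp.
by congr (_ ++ flatten _); apply: eq_map => k /=; rewrite addnA.
Qed.

Lemma take_flatten_index (T : Type) (ss : seq (seq T)) r c : c <= size (nth [::] ss r) ->
  take (flatten_index (shape ss) r c) (flatten ss) = flatten (take r ss) ++ take c (nth [::] ss r).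
Proof.
rewrite /flatten_index; elim: ss r => [|s ss IH] [|r] //= le_c.
  rewrite add0n take_cat ltn_neqAle le_c andbT; case: eqP => [->|//].
  by rewrite subnn take0 cats0 take_size.
by rewrite -addnA take_cat ltnNge leq_addr /= addKn IH // catA.
Qed.

(** * The category ΔH_+ *)

Lemma dh_twistK : involutive dh_twist.
Proof.
move=> s; rewrite /dh_twist map_rev revK -map_comp -[RHS]map_id.
by apply: eq_map => -[x b] /=; rewrite negbK.
Qed.

Lemma map_fst_twist s : [seq y.1 | y <- dh_twist s] = rev [seq y.1 | y <- s].
Proof. by rewrite /dh_twist map_rev -map_comp. Qed.

Lemma dh_twist_flatten ss : dh_twist (flatten ss) = flatten (rev (map dh_twist ss)).
Proof. by rewrite /dh_twist map_flatten rev_flatten -map_comp. Qed.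

Definition dh_fibre (f : dh_mor) (y : nat * bool) : seq (nat * bool) :=
  if y.2 then dh_twist (nth [::] f y.1) else nth [::] f y.1.

Lemma dh_compE g f : dh_comp g f = [seq flatten (map (dh_fibre f) gi) | gi <- g].
Proof. by []. Qed.

Lemma nth_dh_comp g f j :
  nth [::] (dh_comp g f) j = flatten (map (dh_fibre f) (nth [::] g j)).
Proof. by elim: g j => [|gi g IH] [|j] //=. Qed.

Lemma dh_fibre_flip f y : dh_fibre f (y.1, ~~ y.2) = dh_twist (dh_fibre f y).
Proof. by rewrite /dh_fibre /=; case: y.2; rewrite ?dh_twistK. Qed.

Lemma dh_fibre_comp g f y :
  dh_fibre (dh_comp g f) y = flatten (map (dh_fibre f) (dh_fibre g y)).
Proof.
rewrite /dh_fibre nth_dh_comp; case: y.2 => //.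
rewrite dh_twist_flatten {2}/dh_twist map_rev -!map_comp; congr (flatten (rev _)).
by apply: eq_map => z /=; rewrite -dh_fibre_flip.
Qed.

Lemma dh_comp_assoc h g f : dh_comp h (dh_comp g f) = dh_comp (dh_comp h g) f.
Proof.
rewrite !dh_compE -map_comp; apply: eq_map => hi /=.
rewrite map_flatten flatten_flatten -!map_comp; congr flatten.
by apply: eq_map => y /=; rewrite dh_fibre_comp.
Qed.

Lemma dh_dom_id n : dh_dom (dh_id n) = n.
Proof. by rewrite /dh_dom -(size_map fst) dh_id_fst size_iota. Qed.

Lemma dh_comp_id f n : {in flatten f, forall y, y.1 < n} -> dh_comp f (dh_id n) = f.
Proof.
move=> lt_n; rewrite dh_compE -[RHS]map_id; apply/eq_in_map => fi fi_f /=.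
rewrite -[RHS]flatten_seq1; congr flatten; apply/eq_in_map => -[x b] y_fi.
have {}lt_n : x < n by apply: (lt_n (x, b)); apply/flattenP; exists fi.
by rewrite /dh_fibre /dh_id (nth_map 0) ?size_iota // nth_iota //; case: b {y_fi}.
Qed.

Lemma dh_id_comp f : dh_comp (dh_id (dh_cod f)) f = f.
Proof.
rewrite dh_compE /dh_id -map_comp -[RHS](mkseq_nth [::]).
by apply: eq_map => i /=; rewrite cats0.
Qed.

Lemma dh_valid_lt f y : dh_valid f -> y \in flatten f -> y.1 < dh_dom f.
Proof.
by move=> /perm_mem f_perm y_f; have := map_f fst y_f; rewrite f_perm mem_iota.
Qed.

Lemma flatten_dh_comp g f : flatten (dh_comp g f) = flatten (map (dh_fibre f) (flatten g)).
Proof. by rewrite dh_compE (map_comp flatten) -flatten_flatten -map_flatten. Qed.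

Lemma perm_dh_comp g f : dh_valid g -> dh_dom g = dh_cod f ->
  perm_eq [seq y.1 | y <- flatten (dh_comp g f)] [seq y.1 | y <- flatten f].
Proof.
move=> g_valid dom_g; rewrite flatten_dh_comp map_flatten -map_comp.
apply: perm_trans (_ : perm_eq _ (flatten [seq [seq z.1 | z <- nth [::] f j]
                                          | j <- [seq y.1 | y <- flatten g]])) _.
  rewrite -map_comp; apply: perm_flatten_map_in => y _ /=.
  by rewrite /dh_fibre; case: y.2; rewrite ?map_fst_twist ?perm_rev.
apply: perm_trans (perm_flatten_map _ g_valid) _.
by rewrite dom_g map_flatten -{3}(mkseq_nth [::] f) -map_comp.
Qed.

Lemma dh_dom_comp g f : dh_valid g -> dh_dom g = dh_cod f ->
  dh_dom (dh_comp g f) = dh_dom f.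
Proof. by move=> g_valid /(perm_dh_comp g_valid)/perm_size; rewrite !size_map. Qed.

Lemma dh_comp_valid g f : dh_valid g -> dh_valid f -> dh_dom g = dh_cod f ->
  dh_valid (dh_comp g f).
Proof.
move=> g_valid f_valid dom_g; rewrite /dh_valid (dh_dom_comp g_valid dom_g).
exact: perm_trans (perm_dh_comp g_valid dom_g) f_valid.
Qed.

(** * The functor H_M and the category T(M) *)

Section Action.
Variable M : invMonoid.
Local Notation mul := (@im_mul M).
Local Notation one := (im_one M).
Local Notation inv := (@im_inv M).

Definition dh_eval (m : seq M) (y : nat * bool) : M :=
  if y.2 then inv (nth one m y.1) else nth one m y.1.

Definition dh_prod (m : seq M) (s : seq (nat * bool)) : M :=
  foldr (fun y acc => mul (dh_eval m y) acc) one s.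

Lemma dh_actE f (m : seq M) : dh_act f m = map (dh_prod m) f.
Proof. by []. Qed.

Lemma size_dh_act f (m : seq M) : size (dh_act f m) = size f.
Proof. exact: size_map. Qed.

Lemma dh_prod_cat m s1 s2 : dh_prod m (s1 ++ s2) = mul (dh_prod m s1) (dh_prod m s2).
Proof. by elim: s1 => [|y s1 IH] /=; rewrite ?im_mul1m // IH im_mulA. Qed.

Lemma dh_prod_flatten m ss : dh_prod m (flatten ss) = foldr mul one (map (dh_prod m) ss).
Proof. by elim: ss => //= s ss <-; rewrite dh_prod_cat. Qed.

Lemma dh_prod_twist m s : dh_prod m (dh_twist s) = inv (dh_prod m s).
Proof.
elim: s => [|y s IH] /=; first by rewrite im_inv1.
rewrite /dh_twist /= rev_cons -cats1 dh_prod_cat -/(dh_twist s) IH /= im_mulm1 im_invM.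
by rewrite /dh_eval /=; case: y.2; rewrite ?im_invK.
Qed.

Lemma dh_prod_fibre f m y : dh_prod m (dh_fibre f y) = dh_eval (dh_act f m) y.
Proof.
have nth_act : nth one (dh_act f m) y.1 = dh_prod m (nth [::] f y.1).
  by elim: f y.1 => [|fi f IH] [|j] //=.
by rewrite /dh_fibre /dh_eval nth_act; case: y.2; rewrite ?dh_prod_twist.
Qed.

Lemma dh_act_comp g f (m : seq M) : dh_act (dh_comp g f) m = dh_act g (dh_act f m).
Proof.
rewrite dh_compE !dh_actE -map_comp; apply: eq_map => gi /=.
rewrite dh_prod_flatten -map_comp.
by elim: gi => //= y gi ->; rewrite dh_prod_fibre.
Qed.

Lemma dh_act_id (m : seq M) : dh_act (dh_id (size m)) m = m.
Proof.
rewrite dh_actE -map_comp -[RHS](mkseq_nth one); apply: eq_map => i.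
by rewrite /= im_mulm1.
Qed.

End Action.

Section TupleCategory.
Variable M : invMonoid.
Implicit Types f g h : tm_mor M.

Definition tm_dh f : dh_mor := (val f).2.

Lemma tm_dh_valid f : dh_valid (tm_dh f).
Proof. by case/andP: (valP f). Qed.

Lemma dh_dom_tm f : dh_dom (tm_dh f) = size (tm_src f).
Proof. by case/andP: (valP f) => _ /eqP. Qed.

Lemma tm_tgtE f : tm_tgt f = dh_act (tm_dh f) (tm_src f).
Proof. by []. Qed.

Lemma dh_cod_tm f : dh_cod (tm_dh f) = size (tm_tgt f).
Proof. by rewrite tm_tgtE size_dh_act. Qed.

Lemma tm_comp_valid g f : tm_src g = tm_tgt f ->
  tm_valid (tm_src f, dh_comp (tm_dh g) (tm_dh f)).
Proof.
move=> src_g; have dom_g : dh_dom (tm_dh g) = dh_cod (tm_dh f).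
  by rewrite dh_dom_tm src_g dh_cod_tm.
rewrite /tm_valid /= dh_comp_valid ?tm_dh_valid //=.
by rewrite dh_dom_comp ?tm_dh_valid // dh_dom_tm.
Qed.

Lemma val_tm_comp g f : tm_src g = tm_tgt f ->
  val (tm_comp g f) = (tm_src f, dh_comp (tm_dh g) (tm_dh f)).
Proof. by move=> src_g; rewrite /tm_comp insubdK //; apply: tm_comp_valid. Qed.

Lemma tm_src_comp g f : tm_src g = tm_tgt f -> tm_src (tm_comp g f) = tm_src f.
Proof. by move=> src_g; rewrite /tm_src val_tm_comp. Qed.

Lemma tm_dh_comp g f : tm_src g = tm_tgt f ->
  tm_dh (tm_comp g f) = dh_comp (tm_dh g) (tm_dh f).
Proof. by move=> src_g; rewrite /tm_dh val_tm_comp. Qed.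

Lemma tm_tgt_comp g f : tm_src g = tm_tgt f -> tm_tgt (tm_comp g f) = tm_tgt g.
Proof.
move=> src_g; rewrite !tm_tgtE tm_src_comp // tm_dh_comp //.
by rewrite dh_act_comp -tm_tgtE -src_g.
Qed.

Lemma tm_dh_idm (a : seq M) : tm_dh (tm_idm a) = dh_id (size a).
Proof. by []. Qed.

Lemma tm_tgt_idm (a : seq M) : tm_tgt (tm_idm a) = a.
Proof. exact: dh_act_id. Qed.

Lemma tm_mor_eq f g : tm_src f = tm_src g -> tm_dh f = tm_dh g -> f = g.
Proof.
move=> src_fg dh_fg; apply: val_inj.
by rewrite [val f]surjective_pairing [val g]surjective_pairing; congr pair.
Qed.

Lemma TM_category : is_category (TM M).
Proof.
split=> /=.
- by move=> a; rewrite tm_tgt_idm.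
- by move=> g f src_g; rewrite tm_src_comp ?tm_tgt_comp.
- move=> f; apply: tm_mor_eq; rewrite ?tm_src_comp ?tm_dh_comp ?tm_tgt_idm //.
  rewrite tm_dh_idm -dh_dom_tm dh_comp_id // => y; exact: dh_valid_lt (tm_dh_valid f).
- move=> f; apply: tm_mor_eq; rewrite ?tm_src_comp ?tm_dh_comp //.
  by rewrite tm_dh_idm -dh_cod_tm dh_id_comp.
- move=> h g f src_h src_g; have src_hg : tm_src (tm_comp h g) = tm_tgt f.
    by rewrite tm_src_comp.
  have src_h' : tm_src h = tm_tgt (tm_comp g f) by rewrite tm_tgt_comp.
  apply: tm_mor_eq; first by rewrite !tm_src_comp.
  by rewrite !tm_dh_comp // dh_comp_assoc.
Qed.

End TupleCategory.

(** * Block morphisms of ΔH_+ *)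

Definition dh_shift (o : nat) (s : seq (nat * bool)) : seq (nat * bool) :=
  [seq (o + y.1, y.2) | y <- s].

Lemma dh_shift0 : dh_shift 0 =1 id.
Proof. by move=> s; rewrite /dh_shift -[RHS]map_id; apply: eq_map => -[]. Qed.

Lemma dh_shiftD o1 o2 s : dh_shift o1 (dh_shift o2 s) = dh_shift (o1 + o2) s.
Proof. by rewrite /dh_shift -map_comp; apply: eq_map => y /=; rewrite addnA. Qed.

Lemma dh_shift_twist o s : dh_shift o (dh_twist s) = dh_twist (dh_shift o s).
Proof. by rewrite /dh_shift /dh_twist map_rev -!map_comp. Qed.

Lemma map_fst_shift o s : [seq y.1 | y <- dh_shift o s] = map (addn o) [seq y.1 | y <- s].
Proof. by rewrite /dh_shift -!map_comp. Qed.

Definition dh_offset (fs : seq dh_mor) (k : nat) : nat :=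
  sumn (take k (map dh_dom fs)).

(* [dh_blocks fs p] is f_0 ⊕ ... ⊕ f_(n-1) followed by the permutation of target blocks that
   puts the block of f_(p_0) first, then that of f_(p_1), and so on. *)
Definition dh_blocks (fs : seq dh_mor) (p : seq nat) : dh_mor :=
  flatten [seq map (dh_shift (dh_offset fs k)) (nth [::] fs k) | k <- p].

Lemma flatten_dh_blocks fs p : flatten (dh_blocks fs p)
  = flatten [seq dh_shift (dh_offset fs k) (flatten (nth [::] fs k)) | k <- p].
Proof.
rewrite /dh_blocks flatten_flatten -map_comp; congr flatten.
by apply: eq_map => k /=; rewrite /dh_shift map_flatten.
Qed.

Lemma dh_dom_blocks fs p : perm_eq p (iota 0 (size fs)) ->
  dh_dom (dh_blocks fs p) = sumn (map dh_dom fs).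
Proof.
move=> p_perm; rewrite /dh_dom flatten_dh_blocks size_flatten /shape -map_comp.
rewrite (perm_sumn (perm_map _ p_perm)) -[in RHS](mkseq_nth [::] fs) -map_comp.
by congr sumn; apply: eq_map => k /=; rewrite size_map.
Qed.

Lemma dh_blocks_valid fs p : all dh_valid fs -> perm_eq p (iota 0 (size fs)) ->
  dh_valid (dh_blocks fs p).
Proof.
move=> fs_valid p_perm.
rewrite /dh_valid dh_dom_blocks // flatten_dh_blocks map_flatten -map_comp.
apply: perm_trans (_ : perm_eq _ (flatten
    [seq iota (0 + dh_offset fs k) (nth 0 (map dh_dom fs) k) | k <- p])) _.
  apply: perm_flatten_map_in => k; rewrite (perm_mem p_perm) mem_iota /= => lt_k.
  rewrite map_fst_shift add0n (nth_map [::]) // -(addn0 (dh_offset fs k)) iotaDl addn0.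
  by rewrite perm_map //; apply: (allP fs_valid); apply: mem_nth.
apply: perm_trans (perm_flatten_map _ p_perm) _.
by rewrite -(size_map dh_dom) flatten_iota_blocks.
Qed.

Lemma nth_dh_blocks fs p j a : j < size p -> a < dh_cod (nth [::] fs (nth 0 p j)) ->
  nth [::] (dh_blocks fs p) (flatten_index [seq dh_cod (nth [::] fs k) | k <- p] j a)
  = dh_shift (dh_offset fs (nth 0 p j)) (nth [::] (nth [::] fs (nth 0 p j)) a).
Proof.
move=> lt_j lt_a; set L := [seq map (dh_shift (dh_offset fs k)) (nth [::] fs k) | k <- p].
have -> : [seq dh_cod (nth [::] fs k) | k <- p] = shape L.
  by rewrite /shape -map_comp; apply: eq_map => k /=; rewrite size_map.
by rewrite nth_flatten_index /L (nth_map 0) ?size_map // (nth_map [::]).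
Qed.

Lemma dh_prod_shift (M : invMonoid) (m m' : seq M) o s :
  {in s, forall y, nth (im_one M) m (o + y.1) = nth (im_one M) m' y.1} ->
  dh_prod m (dh_shift o s) = dh_prod m' s.
Proof.
elim: s => //= y s IH eq_m; rewrite IH => [|z z_s]; last by rewrite eq_m // inE z_s orbT.
by rewrite /dh_eval /= eq_m ?mem_head.
Qed.

Lemma dh_act_blocks (M : invMonoid) fs (ms : seq (seq M)) p :
  all dh_valid fs -> map dh_dom fs = shape ms -> {in p, forall k, k < size fs} ->
  dh_act (dh_blocks fs p) (flatten ms)
  = flatten [seq dh_act (nth [::] fs k) (nth [::] ms k) | k <- p].
Proof.
move=> fs_valid dom_fs lt_p; rewrite dh_actE map_flatten -map_comp; congr flatten.
apply/eq_in_map => k k_p /=; rewrite -map_comp dh_actE; apply/eq_in_map => fi fi_f /=.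
apply: dh_prod_shift => y y_fi; rewrite /dh_offset dom_fs nth_flatten_index //.
have f_valid : dh_valid (nth [::] fs k) by apply: (allP fs_valid); apply: mem_nth; apply: lt_p.
rewrite -nth_shape -dom_fs (nth_map [::]) ?lt_p //.
by apply: dh_valid_lt f_valid _; apply/flattenP; exists fi.
Qed.

Lemma dh_blocks_id ns : dh_blocks (map dh_id ns) (iota 0 (size ns)) = dh_id (sumn ns).
Proof.
have dom_ns : map dh_dom (map dh_id ns) = ns.
  by rewrite -map_comp -[RHS]map_id; apply: eq_map => n /=; rewrite dh_dom_id.
rewrite [RHS]/dh_id -(flatten_iota_blocks ns 0) map_flatten -map_comp /dh_blocks /dh_offset dom_ns.
congr flatten; apply/eq_in_map => k; rewrite mem_iota /= => lt_k.
rewrite (nth_map 0) // add0n /dh_id /dh_shift -map_comp -(addn0 (sumn _)) iotaDl -map_comp.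
by apply: eq_map => i /=; rewrite addn0.
Qed.

Lemma dh_fibre_blocks fs p j y : j < size p -> y.1 < dh_cod (nth [::] fs (nth 0 p j)) ->
  dh_fibre (dh_blocks fs p) (flatten_index [seq dh_cod (nth [::] fs k) | k <- p] j y.1, y.2)
  = dh_shift (dh_offset fs (nth 0 p j)) (dh_fibre (nth [::] fs (nth 0 p j)) y).
Proof.
by move=> lt_j lt_y; rewrite /dh_fibre /= nth_dh_blocks //; case: y.2; rewrite ?dh_shift_twist.
Qed.

Lemma dh_comp_blocks gs fs p p' :
  all dh_valid gs -> map dh_dom gs = map dh_cod fs ->
  {in p, forall k, k < size fs} -> {in p', forall j, j < size p} ->
  dh_comp (dh_blocks [seq nth [::] gs k | k <- p] p') (dh_blocks fs p)
  = dh_blocks [seq dh_comp (nth [::] gs k) (nth [::] fs k) | k <- iota 0 (size fs)]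
              [seq nth 0 p j | j <- p'].
Proof.
move=> gs_valid dom_gs lt_p lt_p'.
have size_gs : size gs = size fs by rewrite -(size_map dh_dom) dom_gs size_map.
have g_valid k : k < size fs -> dh_valid (nth [::] gs k).
  by move=> lt_k; apply: (allP gs_valid); rewrite mem_nth ?size_gs.
have dom_g k : k < size fs -> dh_dom (nth [::] gs k) = dh_cod (nth [::] fs k).
  by move=> lt_k; rewrite -!(nth_map [::] 0) ?size_gs // dom_gs.
have dom_G : map dh_dom [seq nth [::] gs k | k <- p] = [seq dh_cod (nth [::] fs k) | k <- p].
  by rewrite -map_comp; apply/eq_in_map => k /lt_p /dom_g.
have off_H : dh_offset [seq dh_comp (nth [::] gs k) (nth [::] fs k) | k <- iota 0 (size fs)]
    =1 dh_offset fs.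
  move=> k; rewrite /dh_offset -map_comp -[in RHS](mkseq_nth [::] fs) -map_comp.
  congr (sumn (take _ _)); apply/eq_in_map => i; rewrite mem_iota => lt_i /=.
  by rewrite dh_dom_comp ?g_valid ?dom_g.
set F := dh_blocks fs p; rewrite dh_compE {1}/dh_blocks map_flatten /dh_blocks -!map_comp.
congr flatten; apply/eq_in_map => j /lt_p' lt_j /=; have lt_pj := lt_p _ (mem_nth 0 lt_j).
rewrite (nth_map 0) // (nth_map 0) ?size_iota // nth_iota // add0n.
rewrite off_H dh_compE -!map_comp; apply/eq_in_map => gi gi_g /=.
rewrite /dh_shift map_flatten -!map_comp; congr flatten; apply/eq_in_map => y y_gi /=.
have lt_y : y.1 < dh_cod (nth [::] fs (nth 0 p j)).
  by rewrite -dom_g //; apply: dh_valid_lt (g_valid _ lt_pj) _; apply/flattenP; exists gi.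
by rewrite -[RHS]/(dh_shift _ _) -(dh_fibre_blocks lt_j lt_y) /dh_offset dom_G.
Qed.

Lemma dh_blocks_assoc FS ps P :
  (forall q, q < size FS -> perm_eq (nth [::] ps q) (iota 0 (size (nth [::] FS q)))) ->
  {in P, forall q, q < size FS} ->
  dh_blocks (flatten FS) (flatten [seq map (flatten_index (shape FS) q) (nth [::] ps q) | q <- P])
  = dh_blocks [seq dh_blocks (nth [::] FS q) (nth [::] ps q) | q <- iota 0 (size FS)] P.
Proof.
move=> ps_perm lt_P; set R := [seq dh_blocks _ _ | q <- iota 0 (size FS)].
have off_R q : dh_offset R q = sumn (take q (map sumn (map (map dh_dom) FS))).
  rewrite /dh_offset -!map_comp; congr (sumn (take _ _)).
  rewrite -[in RHS](mkseq_nth [::] FS) -map_comp; apply/eq_in_map => k.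
  by rewrite mem_iota => lt_k /=; rewrite dh_dom_blocks // ps_perm.
rewrite /dh_blocks map_flatten flatten_flatten -!map_comp; congr flatten.
apply/eq_in_map => q /lt_P lt_q /=; rewrite /R (nth_map 0) ?size_iota // nth_iota // add0n.
rewrite -/R map_flatten -!map_comp; congr flatten; apply/eq_in_map => x.
rewrite (perm_mem (ps_perm q lt_q)) mem_iota => /andP[_ lt_x] /=.
rewrite nth_flatten_index // -map_comp; apply: eq_map => fi /=.
rewrite dh_shiftD off_R /dh_offset map_flatten; congr dh_shift.
have -> : shape FS = shape (map (map dh_dom) FS).
  by rewrite /shape -map_comp; apply: eq_map => s /=; rewrite size_map.
rewrite take_flatten_index; last by rewrite (nth_map [::]) // size_map ltnW.
by rewrite sumn_cat sumn_flatten map_take (nth_map [::]).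
Qed.

(** * Permutations and operad composition in D_Cat *)

Lemma isperm_lt w n i : isperm w n -> i \in w -> i < n.
Proof. by move=> /perm_mem w_n; rewrite w_n mem_iota. Qed.

Lemma isperm_uniq w n : isperm w n -> uniq w.
Proof. by move=> /perm_uniq ->; apply: iota_uniq. Qed.

Lemma isperm_size w n : isperm w n -> size w = n.
Proof. by move=> /perm_size ->; rewrite size_iota. Qed.

Lemma isperm_sub w w' n : isperm w n -> isperm w' n -> {subset w' <= w}.
Proof. by move=> /perm_mem w_n /perm_mem w'_n i; rewrite w_n -w'_n. Qed.

Definition positions (w w' : seq nat) : seq nat := [seq index i w | i <- w'].

Lemma positions_id w : uniq w -> positions w w = iota 0 (size w).
Proof.
move=> w_uniq; rewrite /positions -[X in map _ X](mkseq_nth 0 w) -map_comp -[RHS]map_id.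
by apply/eq_in_map => k; rewrite mem_iota => lt_k /=; rewrite index_uniq.
Qed.

Lemma positions_perm w w' n : isperm w n -> isperm w' n ->
  perm_eq (positions w w') (iota 0 n).
Proof.
move=> w_n w'_n; rewrite -(isperm_size w_n) -positions_id ?(isperm_uniq w_n) //.
by apply: perm_map; apply: perm_trans w'_n _; rewrite perm_sym.
Qed.

Lemma positions_lt w w' n : isperm w n -> isperm w' n -> {in positions w w', forall k, k < n}.
Proof. by move=> w_n w'_n k; rewrite (perm_mem (positions_perm w_n w'_n)) mem_iota. Qed.

Lemma nth_map_index (T : Type) (x0 : T) (F : nat -> T) w i :
  i \in w -> nth x0 (map F w) (index i w) = F i.
Proof. by move=> i_w; rewrite (nth_map 0) ?index_mem ?nth_index. Qed.

Lemma map_positions (T : Type) (x0 : T) (F : nat -> T) w w' : {subset w' <= w} ->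
  [seq nth x0 (map F w) k | k <- positions w w'] = map F w'.
Proof. by move=> sub_w; rewrite -map_comp; apply/eq_in_map => i /sub_w; apply: nth_map_index. Qed.

Lemma index_map_in (T1 T2 : eqType) (f : T1 -> T2) (s : seq T1) x :
  {in s &, injective f} -> x \in s -> index (f x) (map f s) = index x s.
Proof.
elim: s => //= y s IH f_inj; rewrite inE; case: (eqVneq x y) => [-> | neq_xy] /= x_s.
  by rewrite !eqxx.
have f_inj_s : {in s &, injective f}.
  by move=> a b a_s b_s; apply: f_inj; rewrite inE ?a_s ?b_s orbT.
rewrite IH //; case: eqP => // /f_inj eq_yx.
by case/eqP: neq_xy; rewrite eq_yx ?mem_head // inE x_s orbT.
Qed.

Lemma positions_map (f : nat -> nat) w w' : {in w &, injective f} -> {subset w' <= w} ->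
  positions (map f w) (map f w') = positions w w'.
Proof.
move=> f_inj sub_w; rewrite /positions -map_comp.
by apply/eq_in_map => i /sub_w i_w /=; apply: index_map_in.
Qed.

Lemma gamma_seqE w us ks :
  gamma_seq w us ks = flatten [seq map (flatten_index ks j) (nth [::] us j) | j <- w].
Proof. by []. Qed.

Lemma gamma_seq_perm w us ks : isperm w (size ks) ->
  (forall j, j < size ks -> isperm (nth [::] us j) (nth 0 ks j)) ->
  isperm (gamma_seq w us ks) (sumn ks).
Proof.
move=> w_ks us_ks; rewrite /isperm gamma_seqE.
apply: perm_trans
  (_ : perm_eq _ (flatten [seq iota (0 + sumn (take j ks)) (nth 0 ks j) | j <- w])) _.
  apply: perm_flatten_map_in => j /(isperm_lt w_ks) lt_j.
  by rewrite add0n -[sumn _]addn0 iotaDl; apply/perm_map/us_ks.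
by apply: perm_trans (perm_flatten_map _ w_ks) _; rewrite flatten_iota_blocks.
Qed.

Lemma positions_gamma w w' us us' ks :
  isperm w (size ks) -> isperm w' (size ks) ->
  (forall j, j < size ks -> isperm (nth [::] us j) (nth 0 ks j)) ->
  (forall j, j < size ks -> isperm (nth [::] us' j) (nth 0 ks j)) ->
  positions (gamma_seq w us ks) (gamma_seq w' us' ks)
  = flatten [seq map (flatten_index [seq nth 0 ks j | j <- w] q)
                     (nth [::] [seq positions (nth [::] us j) (nth [::] us' j) | j <- w] q)
            | q <- positions w w'].
Proof.
move=> w_ks w'_ks us_ks us'_ks.
set GG := [seq map (flatten_index ks j) (nth [::] us j) | j <- w].
have shape_GG : shape GG = [seq nth 0 ks j | j <- w].
  rewrite /shape -map_comp; apply/eq_in_map => j /(isperm_lt w_ks) lt_j /=.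
  by rewrite size_map (isperm_size (us_ks j lt_j)).
have G_uniq : uniq (flatten GG) by apply: isperm_uniq (gamma_seq_perm w_ks us_ks).
rewrite /positions gamma_seqE map_flatten -!map_comp.
congr flatten; apply/eq_in_map => j j_w' /=.
have j_w := isperm_sub w_ks w'_ks j_w'; have lt_j := isperm_lt w_ks j_w.
rewrite nth_map_index // -!map_comp; apply/eq_in_map => u u_us' /=.
have u_us := isperm_sub (us_ks j lt_j) (us'_ks j lt_j) u_us'.
set q := index j w; set x := index u (nth [::] us j).
have lt_q : q < size GG by rewrite size_map index_mem.
have lt_x : x < size (nth [::] GG q).
  by rewrite (nth_map 0) ?index_mem // nth_index // size_map index_mem.
rewrite -[sumn _ + u]/(flatten_index ks j u) -/GG.
have <- : nth 0 (flatten GG) (flatten_index (shape GG) q x) = flatten_index ks j u.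
  rewrite nth_flatten_index // (nth_map 0) ?index_mem // nth_index //.
  by rewrite (nth_map 0) ?index_mem // nth_index.
rewrite index_uniq // ?shape_GG // size_flatten -shape_GG; apply: flatten_indexP.
by rewrite nth_shape.
Qed.

(** * The D_Cat-algebra structure on T(M) *)

Lemma composable_allE (C : precat) (gs fs : seq (Mor C)) :
  composable_all gs fs -> map (src C) gs = map (tgt C) fs.
Proof. by elim: gs fs => [|g gs IH] [|f fs] //= [-> /IH ->]. Qed.

Lemma nth_map_nth (T : Type) (x0 y0 : T) (s : seq T) (r : seq nat) i :
  i < size r -> nth 0 r i < size s -> nth x0 (map (nth y0 s) r) i = nth x0 s (nth 0 r i).
Proof. by move=> lt_i lt_ri; rewrite (nth_map 0) // (set_nth_default x0). Qed.

Section TupleAlgebra.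
Variable M : invMonoid.
Local Notation tmor := (tm_mor M).
Implicit Types (f g : tmor) (fs gs : seq tmor) (xs : seq (seq M)) (w : seq nat).

Definition tm_id_nil : tmor := tm_idm [::].

Definition theta_ob w xs : seq M := flatten [seq nth [::] xs i | i <- w].

Definition theta_dh w w' fs : dh_mor :=
  dh_blocks [seq tm_dh (nth tm_id_nil fs i) | i <- w] (positions w w').

(* Junk value [tm_id_nil] unless [w] and [w'] are permutations of [iota 0 (size fs)]. *)
Definition theta_mor w w' fs : tmor :=
  insubd tm_id_nil (theta_ob w ([seq tm_src f | f <- fs]), theta_dh w w' fs).

Lemma dom_theta_blocks w fs : {in w, forall i, i < size fs} ->
  map dh_dom [seq tm_dh (nth tm_id_nil fs i) | i <- w]
  = shape [seq nth [::] ([seq tm_src f | f <- fs]) i | i <- w].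
Proof.
move=> lt_w; rewrite /shape -!map_comp; apply/eq_in_map => i /lt_w lt_i /=.
by rewrite dh_dom_tm (nth_map tm_id_nil).
Qed.

Lemma theta_valid w w' fs : isperm w (size fs) -> isperm w' (size fs) ->
  tm_valid (theta_ob w ([seq tm_src f | f <- fs]), theta_dh w w' fs).
Proof.
move=> w_fs w'_fs.
have p_perm : perm_eq (positions w w') (iota 0 (size [seq tm_dh (nth tm_id_nil fs i) | i <- w])).
  by rewrite size_map (isperm_size w_fs); apply: positions_perm w_fs w'_fs.
rewrite /tm_valid dh_blocks_valid //=; last by apply/allP => _ /mapP[i _ ->]; apply: tm_dh_valid.
rewrite /theta_dh dh_dom_blocks // dom_theta_blocks => [|i]; last exact: isperm_lt.
by rewrite size_flatten.
Qed.

Lemma tm_src_theta w w' fs : isperm w (size fs) -> isperm w' (size fs) ->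
  tm_src (theta_mor w w' fs) = theta_ob w ([seq tm_src f | f <- fs]).
Proof. by move=> w_fs w'_fs; rewrite /tm_src /theta_mor insubdK //; apply: theta_valid. Qed.

Lemma tm_dh_theta w w' fs : isperm w (size fs) -> isperm w' (size fs) ->
  tm_dh (theta_mor w w' fs) = theta_dh w w' fs.
Proof. by move=> w_fs w'_fs; rewrite /tm_dh /theta_mor insubdK //; apply: theta_valid. Qed.

Lemma tm_tgt_theta w w' fs : isperm w (size fs) -> isperm w' (size fs) ->
  tm_tgt (theta_mor w w' fs) = theta_ob w' ([seq tm_tgt f | f <- fs]).
Proof.
move=> w_fs w'_fs; rewrite tm_tgtE tm_src_theta // tm_dh_theta // /theta_dh.
rewrite dh_act_blocks => [|||k]; first last.
- by rewrite size_map (isperm_size w_fs); apply: positions_lt.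
- by apply: dom_theta_blocks => i; apply: isperm_lt.
- by apply/allP => _ /mapP[i _ ->]; apply: tm_dh_valid.
rewrite /theta_ob /positions -map_comp; congr flatten; apply/eq_in_map => i i_w' /=.
have i_w := isperm_sub w_fs w'_fs i_w'.
by rewrite !nth_map_index // !(nth_map tm_id_nil) ?(isperm_lt w'_fs).
Qed.

Lemma theta_mor_id w xs : isperm w (size xs) ->
  theta_mor w w [seq tm_idm x | x <- xs] = tm_idm (theta_ob w xs).
Proof.
move=> w_xs; have w_ids : isperm w (size [seq tm_idm x | x <- xs]) by rewrite size_map.
have src_ids : [seq tm_src f | f <- [seq tm_idm x | x <- xs]] = xs by rewrite -map_comp map_id.
apply: tm_mor_eq; first by rewrite tm_src_theta // src_ids.
rewrite tm_dh_theta // tm_dh_idm /theta_dh positions_id ?(isperm_uniq w_xs) //.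
have -> : [seq tm_dh (nth tm_id_nil [seq tm_idm x | x <- xs] i) | i <- w]
    = map dh_id (shape [seq nth [::] xs i | i <- w]).
  rewrite /shape -!map_comp; apply/eq_in_map => i /(isperm_lt w_xs) lt_i /=.
  by rewrite (nth_map [::]).
by rewrite -(size_map (fun i => nth [::] xs i)) -(size_map size) dh_blocks_id size_flatten.
Qed.

Lemma theta_mor_comp w w' w'' fs gs :
  isperm w (size fs) -> isperm w' (size fs) -> isperm w'' (size fs) ->
  [seq tm_src g | g <- gs] = [seq tm_tgt f | f <- fs] ->
  tm_comp (theta_mor w' w'' gs) (theta_mor w w' fs)
  = theta_mor w w'' [seq tm_comp p.1 p.2 | p <- zip gs fs].
Proof.
move=> w_fs w'_fs w''_fs src_gs.
have size_gs : size gs = size fs by rewrite -(size_map (fun g => tm_src g)) src_gs size_map.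
have src_g i : i < size fs -> tm_src (nth tm_id_nil gs i) = tm_tgt (nth tm_id_nil fs i).
  by move=> lt_i; rewrite -(nth_map _ [::]) ?size_gs // src_gs (nth_map tm_id_nil).
set hs := [seq tm_comp p.1 p.2 | p <- zip gs fs].
have size_hs : size hs = size fs by rewrite size_map size_zip size_gs minnn.
have nth_hs i : i < size fs ->
    nth tm_id_nil hs i = tm_comp (nth tm_id_nil gs i) (nth tm_id_nil fs i).
  by move=> lt_i; rewrite (nth_map (tm_id_nil, tm_id_nil)) ?size_zip ?size_gs ?minnn // nth_zip.
have composable : tm_src (theta_mor w' w'' gs) = tm_tgt (theta_mor w w' fs).
  by rewrite tm_src_theta ?size_gs // tm_tgt_theta // src_gs.
have src_hs : [seq tm_src h | h <- hs] = [seq tm_src f | f <- fs].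
  apply: (@eq_from_nth _ [::]); first by rewrite !size_map size_zip size_gs minnn.
  move=> i; rewrite size_map -/hs size_hs => lt_i.
  by rewrite !(nth_map tm_id_nil) ?size_hs // nth_hs // tm_src_comp ?src_g.
apply: tm_mor_eq; first by rewrite tm_src_comp // !tm_src_theta ?size_hs ?src_hs.
rewrite tm_dh_comp // !tm_dh_theta ?size_gs ?size_hs // /theta_dh.
rewrite -(map_positions [::] _ (isperm_sub w_fs w'_fs)) dh_comp_blocks; first last.
- by rewrite size_map (isperm_size w'_fs); apply: positions_lt.
- by rewrite size_map (isperm_size w_fs); apply: positions_lt.
- rewrite -!map_comp; apply/eq_in_map => i /(isperm_lt w_fs) lt_i /=.
  by rewrite dh_dom_tm dh_cod_tm src_g.
- by apply/allP => _ /mapP[i _ ->]; apply: tm_dh_valid.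
congr dh_blocks; last exact: map_positions (isperm_sub w'_fs w''_fs).
rewrite size_map -[in RHS](mkseq_nth 0 w) -map_comp; apply/eq_in_map => k.
rewrite mem_iota => lt_k /=; have lt_i : nth 0 w k < size fs by rewrite (isperm_lt w_fs) ?mem_nth.
by rewrite !(nth_map 0) // nth_hs // tm_dh_comp ?src_g.
Qed.

Lemma theta_ob_unit (x : seq M) : theta_ob [:: 0] [:: x] = x.
Proof. exact: cats0. Qed.

Lemma theta_mor_unit f : theta_mor [:: 0] [:: 0] [:: f] = f.
Proof.
apply: tm_mor_eq; first by rewrite tm_src_theta // theta_ob_unit.
by rewrite tm_dh_theta // /theta_dh /dh_blocks /= cats0 (eq_map dh_shift0) map_id.
Qed.

Lemma theta_ob_equiv w r xs x0 : isperm w (size xs) -> isperm r (size xs) ->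
  theta_ob [seq nth 0 r i | i <- w] xs = theta_ob w [seq nth x0 xs j | j <- r].
Proof.
move=> w_xs r_xs; rewrite /theta_ob -map_comp; congr flatten; apply/eq_in_map => i i_w /=.
have lt_i : i < size r by rewrite (isperm_size r_xs) (isperm_lt w_xs).
by rewrite nth_map_nth // (isperm_lt r_xs) ?mem_nth.
Qed.

Lemma theta_mor_equiv w w' r fs f0 :
  isperm w (size fs) -> isperm w' (size fs) -> isperm r (size fs) ->
  theta_mor [seq nth 0 r i | i <- w] [seq nth 0 r i | i <- w'] fs
  = theta_mor w w' [seq nth f0 fs j | j <- r].
Proof.
move=> w_fs w'_fs r_fs; have lt_r i : i \in w -> i < size r.
  by move=> i_w; rewrite (isperm_size r_fs) (isperm_lt w_fs).
have lt_ri i : i < size r -> nth 0 r i < size fs.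
  by move=> lt_i; rewrite (isperm_lt r_fs) ?mem_nth.
rewrite /theta_mor /theta_dh; congr (insubd _ (_, dh_blocks _ _)).
- rewrite (theta_ob_equiv [::]) ?size_map // -map_comp; congr theta_ob.
  by apply/eq_in_map => j /(isperm_lt r_fs) lt_j /=; rewrite (nth_map f0).
- by rewrite -map_comp; apply/eq_in_map => i /lt_r lt_i /=; rewrite nth_map_nth ?lt_ri.
apply: positions_map (isperm_sub w_fs w'_fs) => i j /lt_r lt_i /lt_r lt_j /eqP.
by rewrite nth_uniq ?(isperm_uniq r_fs) // => /eqP.
Qed.

Lemma theta_ob_assoc w us (xss : seq (seq (seq M))) : isperm w (size xss) ->
  (forall j, j < size xss -> isperm (nth [::] us j) (size (nth [::] xss j))) ->
  theta_ob (gamma_seq w us [seq size xs | xs <- xss]) (flatten xss)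
  = theta_ob w [seq theta_ob (nth [::] us j) (nth [::] xss j) | j <- iota 0 (size xss)].
Proof.
move=> w_xss us_xss; rewrite /theta_ob gamma_seqE map_flatten flatten_flatten -!map_comp.
congr flatten; apply/eq_in_map => j /(isperm_lt w_xss) lt_j /=.
rewrite (nth_map 0) ?size_iota // nth_iota // -map_comp; congr flatten.
by apply/eq_in_map => u /(isperm_lt (us_xss j lt_j)) lt_u /=; rewrite nth_flatten_index.
Qed.

Lemma theta_dh_assoc w w' us us' (fss : seq (seq tmor)) :
  isperm w (size fss) -> isperm w' (size fss) ->
  (forall j, j < size fss -> isperm (nth [::] us j) (nth 0 (shape fss) j)) ->
  (forall j, j < size fss -> isperm (nth [::] us' j) (nth 0 (shape fss) j)) ->
  theta_dh (gamma_seq w us (shape fss)) (gamma_seq w' us' (shape fss)) (flatten fss)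
  = dh_blocks [seq theta_dh (nth [::] us j) (nth [::] us' j) (nth [::] fss j) | j <- w]
              (positions w w').
Proof.
move=> w_fss w'_fss us_fss us'_fss.
set FS := [seq [seq tm_dh (nth tm_id_nil (nth [::] fss j) u) | u <- nth [::] us j] | j <- w].
set ps := [seq positions (nth [::] us j) (nth [::] us' j) | j <- w].
have size_w := isperm_size w_fss.
have lt_wq q : q < size w -> nth 0 w q < size fss.
  by move=> lt_q; rewrite (isperm_lt w_fss) ?mem_nth.
have blocks_FS : [seq tm_dh (nth tm_id_nil (flatten fss) i) | i <- gamma_seq w us (shape fss)]
    = flatten FS.
  rewrite gamma_seqE map_flatten -map_comp; congr flatten.
  apply/eq_in_map => j /(isperm_lt w_fss) lt_j /=; rewrite -map_comp.
  apply/eq_in_map => u /(isperm_lt (us_fss j lt_j)) lt_u /=.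
  by rewrite nth_flatten_index // -nth_shape.
have shape_FS : shape FS = [seq nth 0 (shape fss) j | j <- w].
  rewrite /shape -map_comp; apply/eq_in_map => j /(isperm_lt w_fss) lt_j /=.
  by rewrite size_map (isperm_size (us_fss j lt_j)).
rewrite /theta_dh blocks_FS positions_gamma ?size_map // -shape_FS dh_blocks_assoc.
- congr dh_blocks; rewrite size_map -[in RHS](mkseq_nth 0 w) -map_comp; apply/eq_in_map => q.
  by rewrite mem_iota => lt_q /=; rewrite !(nth_map 0).
- move=> q; rewrite size_map => lt_q; rewrite !(nth_map 0) // size_map.
  have lt_j := lt_wq _ lt_q; rewrite (isperm_size (us_fss _ lt_j)).
  exact: positions_perm (us_fss _ lt_j) (us'_fss _ lt_j).
by rewrite size_map size_w; apply: positions_lt.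
Qed.

Lemma theta_mor_assoc w w' us us' (fss : seq (seq tmor)) :
  isperm w (size fss) -> isperm w' (size fss) ->
  (forall j, j < size fss -> isperm (nth [::] us j) (size (nth [::] fss j))) ->
  (forall j, j < size fss -> isperm (nth [::] us' j) (size (nth [::] fss j))) ->
  theta_mor (gamma_seq w us [seq size fs | fs <- fss])
            (gamma_seq w' us' [seq size fs | fs <- fss]) (flatten fss)
  = theta_mor w w' [seq theta_mor (nth [::] us j) (nth [::] us' j) (nth [::] fss j)
                   | j <- iota 0 (size fss)].
Proof.
move=> w_fss w'_fss us_fss us'_fss; rewrite -[[seq size fs | fs <- fss]]/(shape fss).
have shape_perm vs :
    (forall j, j < size fss -> isperm (nth [::] vs j) (size (nth [::] fss j))) ->
    forall j, j < size fss -> isperm (nth [::] vs j) (nth 0 (shape fss) j).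
  by move=> vs_fss j; rewrite nth_shape; apply: vs_fss.
have us_shape := shape_perm _ us_fss; have us'_shape := shape_perm _ us'_fss.
have gamma_perm v vs : isperm v (size fss) ->
    (forall j, j < size fss -> isperm (nth [::] vs j) (nth 0 (shape fss) j)) ->
    isperm (gamma_seq v vs (shape fss)) (size (flatten fss)).
  by move=> v_fss vs_fss; rewrite size_flatten; apply: gamma_seq_perm; rewrite size_map.
set Rm := [seq theta_mor _ _ _ | j <- iota 0 (size fss)].
have size_Rm : size Rm = size fss by rewrite size_map size_iota.
have theta_Rm i : i < size fss ->
    nth tm_id_nil Rm i = theta_mor (nth [::] us i) (nth [::] us' i) (nth [::] fss i).
  by move=> lt_i; rewrite (nth_map 0) ?size_iota // nth_iota.
apply: tm_mor_eq.
  rewrite !tm_src_theta ?size_Rm ?gamma_perm // map_flatten.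
  have -> : shape fss = [seq size xs | xs <- [seq [seq tm_src f | f <- fs] | fs <- fss]].
    by rewrite /shape -map_comp; apply: eq_map => fs /=; rewrite size_map.
  rewrite theta_ob_assoc; first last.
  - move=> j; rewrite size_map => lt_j.
    by rewrite (nth_map [::]) // size_map; apply: us_fss.
  - by rewrite size_map.
  congr theta_ob; rewrite [in LHS]size_map -[RHS]map_comp.
  apply/eq_in_map => j; rewrite mem_iota => lt_j /=.
  by rewrite tm_src_theta ?us_fss ?us'_fss // (nth_map [::]).
rewrite !tm_dh_theta ?size_Rm ?gamma_perm // theta_dh_assoc //.
congr dh_blocks; apply/eq_in_map => i /(isperm_lt w_fss) lt_i /=.
by rewrite theta_Rm // tm_dh_theta //; [apply: us_fss | apply: us'_fss].
Qed.

End TupleAlgebra.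

Theorem lemma2p3 (M : invMonoid) :
  is_category (TM M) /\ inhabited (DCat_alg (TM M)).
Proof.
split; first exact: TM_category.
constructor; apply: (@Build_DCat_alg (TM M) (@theta_ob M) (@theta_mor M)).
- exact: tm_src_theta.
- exact: tm_tgt_theta.
- exact: theta_mor_id.
- by move=> w w' w'' fs gs w_fs w'_fs w''_fs /composable_allE; apply: theta_mor_comp.
- exact: theta_ob_unit.
- exact: theta_mor_unit.
- exact: theta_ob_equiv.
- exact: theta_mor_equiv.
- by move=> w us xss w_xss _; apply: theta_ob_assoc.
- by move=> w w' us us' fss w_fss w'_fss _ _; apply: theta_mor_assoc.
Qed.
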